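(* (Two-Tensor Lemma) The following always commutes: $\tau_{X,A,B,Y⅋(C\otimes D)⅋Z}\circ(1_{X⅋A}\otimes\tau_{B⅋Y,C,D,Z})=\tau_{X⅋(A\otimes B)⅋Y,C,D,Z}\circ(\tau_{X,A,B,Y⅋C}\otimes 1_{D⅋Z})$ as maps $(X⅋A)\otimes(B⅋Y⅋C)\otimes(D⅋Z)\to X⅋(A\otimes B)⅋Y⅋(C\otimes D)⅋Z$.
   Context: Write ⅋ for par. Let $\mathcal C$ be a $*$-autonomous category: symmetric monoidal $(\mathcal C,\otimes,\mathsf1)$ with contravariant $(-)^\perp$, $A^{\perp\perp}\cong A$, natural bijections (curryfication) $\mathrm{Hom}(A\otimes B^\perp,C)\cong\mathrm{Hom}(A,C⅋B)$ with $A⅋B=(B^\perp\otimes A^\perp)^\perp$; associativity isomorphisms are suppressed. Evaluations $\epsilon_B$ ($(C⅋B)\otimes B^\perp\to C$ and, via symmetry, $B^\perp\otimes(B⅋C)\to C$) are de-curryfications of identities. The internal tensor $\tau_{A,B,C,D}:(A⅋B)\otimes(C⅋D)\to A⅋(B\otimes C)⅋D$ is obtained by curryfying twice (left and right) the map $\epsilon_A\otimes\epsilon_D:A^\perp\otimes(A⅋B)\otimes(C⅋D)\otimes D^\perp\to B\otimes C$. *)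

(* A *-autonomous category is presented (Barr) as a symmetric monoidal closed
   category with a dualizing object [bot]: the canonical map
   d_A : A -> (A -o bot) -o bot is an isomorphism. *)

Record StarAut : Type := {
  Obj : Type;
  Hom : Obj -> Obj -> Type;
  idm : forall A, Hom A A;
  comp : forall A B C, Hom B C -> Hom A B -> Hom A C;
  comp_idl : forall A B (f : Hom A B), comp _ _ _ (idm B) f = f;
  comp_idr : forall A B (f : Hom A B), comp _ _ _ f (idm A) = f;
  comp_assoc : forall A B C D (f : Hom A B) (g : Hom B C) (h : Hom C D),
      comp _ _ _ h (comp _ _ _ g f) = comp _ _ _ (comp _ _ _ h g) f;
  tens : Obj -> Obj -> Obj;
  tensm : forall A A' B B', Hom A A' -> Hom B B' -> Hom (tens A B) (tens A' B');
  tensm_id : forall A B, tensm _ _ _ _ (idm A) (idm B) = idm (tens A B);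
  tensm_comp : forall A A' A'' B B' B'' (f : Hom A A') (f' : Hom A' A'')
      (g : Hom B B') (g' : Hom B' B''),
      tensm _ _ _ _ (comp _ _ _ f' f) (comp _ _ _ g' g)
      = comp _ _ _ (tensm _ _ _ _ f' g') (tensm _ _ _ _ f g);
  unit : Obj;
  assoc : forall A B C, Hom (tens (tens A B) C) (tens A (tens B C));
  assoc_inv : forall A B C, Hom (tens A (tens B C)) (tens (tens A B) C);
  assoc_iso1 : forall A B C, comp _ _ _ (assoc_inv A B C) (assoc A B C) = idm _;
  assoc_iso2 : forall A B C, comp _ _ _ (assoc A B C) (assoc_inv A B C) = idm _;
  assoc_nat : forall A A' B B' C C' (f : Hom A A') (g : Hom B B') (h : Hom C C'),
      comp _ _ _ (assoc A' B' C') (tensm _ _ _ _ (tensm _ _ _ _ f g) h)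
      = comp _ _ _ (tensm _ _ _ _ f (tensm _ _ _ _ g h)) (assoc A B C);
  lunit : forall A, Hom (tens unit A) A;
  lunit_inv : forall A, Hom A (tens unit A);
  lunit_iso1 : forall A, comp _ _ _ (lunit_inv A) (lunit A) = idm _;
  lunit_iso2 : forall A, comp _ _ _ (lunit A) (lunit_inv A) = idm _;
  lunit_nat : forall A A' (f : Hom A A'),
      comp _ _ _ (lunit A') (tensm _ _ _ _ (idm unit) f) = comp _ _ _ f (lunit A);
  runit : forall A, Hom (tens A unit) A;
  runit_inv : forall A, Hom A (tens A unit);
  runit_iso1 : forall A, comp _ _ _ (runit_inv A) (runit A) = idm _;
  runit_iso2 : forall A, comp _ _ _ (runit A) (runit_inv A) = idm _;
  runit_nat : forall A A' (f : Hom A A'),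
      comp _ _ _ (runit A') (tensm _ _ _ _ f (idm unit)) = comp _ _ _ f (runit A);
  sym : forall A B, Hom (tens A B) (tens B A);
  sym_inv : forall A B, comp _ _ _ (sym B A) (sym A B) = idm _;
  sym_nat : forall A A' B B' (f : Hom A A') (g : Hom B B'),
      comp _ _ _ (sym A' B') (tensm _ _ _ _ f g)
      = comp _ _ _ (tensm _ _ _ _ g f) (sym A B);
  pentagon : forall A B C D,
      comp _ _ _ (assoc A B (tens C D)) (assoc (tens A B) C D)
      = comp _ _ _ (tensm _ _ _ _ (idm A) (assoc B C D))
          (comp _ _ _ (assoc A (tens B C) D) (tensm _ _ _ _ (assoc A B C) (idm D)));
  triangle : forall A B,
      comp _ _ _ (tensm _ _ _ _ (idm A) (lunit B)) (assoc A unit B)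
      = tensm _ _ _ _ (runit A) (idm B);
  hexagon : forall A B C,
      comp _ _ _ (assoc B C A) (comp _ _ _ (sym A (tens B C)) (assoc A B C))
      = comp _ _ _ (tensm _ _ _ _ (idm B) (sym A C))
          (comp _ _ _ (assoc B A C) (tensm _ _ _ _ (sym A B) (idm C)));
  ihom : Obj -> Obj -> Obj;
  ev : forall B C, Hom (tens (ihom B C) B) C;
  lam : forall A B C, Hom (tens A B) C -> Hom A (ihom B C);
  ev_lam : forall A B C (g : Hom (tens A B) C),
      comp _ _ _ (ev B C) (tensm _ _ _ _ (lam A B C g) (idm B)) = g;
  lam_ev : forall A B C (h : Hom A (ihom B C)),
      lam A B C (comp _ _ _ (ev B C) (tensm _ _ _ _ h (idm B))) = h;
  (* dualizing object: the canonical d_A : A -> (A -o bot) -o bot is iso,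
     with inverse dd A *)
  bot : Obj;
  dd : forall A, Hom (ihom (ihom A bot) bot) A;
  dd_iso1 : forall A,
      comp _ _ _ (dd A) (lam _ _ _ (comp _ _ _ (ev A bot) (sym A (ihom A bot))))
      = idm A;
  dd_iso2 : forall A,
      comp _ _ _ (lam _ _ _ (comp _ _ _ (ev A bot) (sym A (ihom A bot)))) (dd A)
      = idm _
}.

Arguments Obj : clear implicits.
Arguments Hom {s} _ _.
Arguments idm {s} _.
Arguments comp {s A B C} _ _.
Arguments tens {s} _ _.
Arguments tensm {s A A' B B'} _ _.
Arguments assoc {s} _ _ _.
Arguments assoc_inv {s} _ _ _.
Arguments sym {s} _ _.
Arguments ihom {s} _ _.
Arguments ev {s} _ _.
Arguments lam {s A B C} _.
Arguments bot {s}.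
Arguments dd {s} _.

Declare Scope cat_scope.
Delimit Scope cat_scope with cat.
Notation "g ∘ f" := (comp g f) (at level 40, left associativity) : cat_scope.
Notation "A ⊗ B" := (tens A B) (at level 34, right associativity) : cat_scope.
Notation "f ⊗m g" := (tensm f g) (at level 34, right associativity) : cat_scope.
Open Scope cat_scope.

Definition dual {C : StarAut} (A : Obj C) : Obj C := ihom A bot.
Notation "A ^⊥" := (dual A) (at level 20) : cat_scope.

Definition dualm {C : StarAut} {A B : Obj C} (f : Hom A B) : Hom (B^⊥) (A^⊥) :=
  lam (ev B bot ∘ (idm (B^⊥) ⊗m f)).

Definition dcan {C : StarAut} (A : Obj C) : Hom A ((A^⊥)^⊥) :=
  lam (ev A bot ∘ sym A (A^⊥)).

Definition par {C : StarAut} (A B : Obj C) : Obj C := ((B^⊥) ⊗ (A^⊥))^⊥.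
Notation "A ⅋ B" := (par A B) (at level 35, right associativity) : cat_scope.

Definition parm {C : StarAut} {A A' B B' : Obj C} (f : Hom A A') (g : Hom B B') :
  Hom (A ⅋ B) (A' ⅋ B') := dualm (dualm g ⊗m dualm f).

Definition parsym {C : StarAut} (A B : Obj C) : Hom (A ⅋ B) (B ⅋ A) :=
  dualm (sym (A^⊥) (B^⊥)).

Definition parassoc {C : StarAut} (A B D : Obj C) : Hom ((A ⅋ B) ⅋ D) (A ⅋ (B ⅋ D)) :=
  dualm ((idm (D^⊥) ⊗m dcan ((B^⊥) ⊗ (A^⊥)))
         ∘ assoc (D^⊥) (B^⊥) (A^⊥)
         ∘ (dd ((D^⊥) ⊗ (B^⊥)) ⊗m idm (A^⊥))).

Definition parassoc_inv {C : StarAut} (A B D : Obj C) : Hom (A ⅋ (B ⅋ D)) ((A ⅋ B) ⅋ D) :=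
  dualm ((dcan ((D^⊥) ⊗ (B^⊥)) ⊗m idm (A^⊥))
         ∘ assoc_inv (D^⊥) (B^⊥) (A^⊥)
         ∘ (idm (D^⊥) ⊗m dd ((B^⊥) ⊗ (A^⊥)))).

Definition curry {C : StarAut} {A B D : Obj C} (g : Hom (A ⊗ B^⊥) D) : Hom A (D ⅋ B) :=
  lam (ev D bot ∘ sym D (D^⊥) ∘ (g ⊗m idm (D^⊥)) ∘ assoc_inv A (B^⊥) (D^⊥)).

Definition uncurry {C : StarAut} {A B D : Obj C} (h : Hom A (D ⅋ B)) : Hom (A ⊗ B^⊥) D :=
  dd D ∘ lam (ev _ bot ∘ (h ⊗m idm ((B^⊥) ⊗ (D^⊥))) ∘ assoc A (B^⊥) (D^⊥)).

Definition evR {C : StarAut} (B D : Obj C) : Hom ((D ⅋ B) ⊗ B^⊥) D :=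
  uncurry (idm (D ⅋ B)).

Definition evL {C : StarAut} (B D : Obj C) : Hom (B^⊥ ⊗ (B ⅋ D)) D :=
  evR B D ∘ (parsym B D ⊗m idm (B^⊥)) ∘ sym (B^⊥) (B ⅋ D).

Definition curryL {C : StarAut} {A Z Y : Obj C} (g : Hom (A^⊥ ⊗ Z) Y) : Hom Z (A ⅋ Y) :=
  parsym Y A ∘ curry (g ∘ sym Z (A^⊥)).

(* Internal tensor  tau_{A,B,D,E} : (A⅋B) ⊗ (D⅋E) -> A ⅋ ((B ⊗ D) ⅋ E),
   obtained by curryfying (right in E, then left in A) the map
   evL_A ⊗ evR_E : (A^⊥ ⊗ (A⅋B)) ⊗ ((D⅋E) ⊗ E^⊥) -> B ⊗ D. *)
Definition tau {C : StarAut} (A B D E : Obj C) :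
  Hom ((A ⅋ B) ⊗ (D ⅋ E)) (A ⅋ ((B ⊗ D) ⅋ E)) :=
  curryL (curry ((evL A B ⊗m evR E D)
                 ∘ assoc_inv (A^⊥) (A ⅋ B) ((D ⅋ E) ⊗ E^⊥)
                 ∘ (idm (A^⊥) ⊗m assoc (A ⅋ B) (D ⅋ E) (E^⊥))
                 ∘ assoc (A^⊥) ((A ⅋ B) ⊗ (D ⅋ E)) (E^⊥))).

(* A map into X ⅋ ((A ⊗ B) ⅋ (Y ⅋ ((C ⊗ D) ⅋ Z))) is determined by what is left
   after evaluating away X on the left and Y ⅋ ((C ⊗ D) ⅋ Z) on the right.  Evaluating
   an internal tensor on both sides gives the tensor of the two evaluations,
   evaluating it on the right only leaves an evaluation of its left factor, and
   evaluations through the par associators split into iterated evaluations.  After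
   these rewrites both sides of the two-tensor equation become the same composite of
   evaluations up to associators, and Mac Lane's coherence theorem for associativity
   closes the gap.  Each of the evaluation identities is itself checked by pairing
   with the dual object and normalising in the underlying closed category. *)

From Stdlib Require Import Setoid.

Section Monoidal.
Context {C : StarAut}.

Lemma compA {A B D E : Obj C} (f : Hom A B) (g : Hom B D) (h : Hom D E) :
  h ∘ (g ∘ f) = h ∘ g ∘ f.
Proof. apply comp_assoc. Qed.

Lemma idm_comp {A B : Obj C} (f : Hom A B) : idm B ∘ f = f.
Proof. apply comp_idl. Qed.

Lemma comp_idm {A B : Obj C} (f : Hom A B) : f ∘ idm A = f.
Proof. apply comp_idr. Qed.

Lemma tensm_idm {A B : Obj C} : idm A ⊗m idm B = idm (A ⊗ B).
Proof. apply tensm_id. Qed.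

Lemma tensm_compE {A A' A'' B B' B'' : Obj C} (f : Hom A A') (f' : Hom A' A'')
    (g : Hom B B') (g' : Hom B' B'') :
  (f' ⊗m g') ∘ (f ⊗m g) = (f' ∘ f) ⊗m (g' ∘ g).
Proof. symmetry; apply tensm_comp. Qed.

Lemma tensm_comp_l {A A' A'' B B' : Obj C} (f : Hom A' A'') (s : Hom A A') (h : Hom B B') :
  (f ∘ s) ⊗m h = (f ⊗m h) ∘ (s ⊗m idm B).
Proof. rewrite tensm_compE, comp_idm; reflexivity. Qed.

Lemma tensm_comp_r {A A' A'' B B' : Obj C} (f : Hom A' A'') (s : Hom A A') (h : Hom B B') :
  h ⊗m (f ∘ s) = (h ⊗m f) ∘ (idm B ⊗m s).
Proof. rewrite tensm_compE, comp_idm; reflexivity. Qed.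

Lemma comp_ctx {A B D E : Obj C} (a : Hom B D) (b : Hom A B) (r : Hom A D) (z : Hom D E) :
  a ∘ b = r -> z ∘ a ∘ b = z ∘ r.
Proof. intros H; rewrite <- compA, H; reflexivity. Qed.

Lemma assoc_assoc_inv (A B D : Obj C) : assoc A B D ∘ assoc_inv A B D = idm _.
Proof. apply assoc_iso2. Qed.

Lemma assoc_inv_assoc (A B D : Obj C) : assoc_inv A B D ∘ assoc A B D = idm _.
Proof. apply assoc_iso1. Qed.

Lemma sym_sym (A B : Obj C) : sym B A ∘ sym A B = idm _.
Proof. apply sym_inv. Qed.

Lemma sym_natE {A A' B B' : Obj C} (f : Hom A A') (g : Hom B B') :
  sym A' B' ∘ (f ⊗m g) = (g ⊗m f) ∘ sym A B.
Proof. apply sym_nat. Qed.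

Lemma assoc_natE {A A' B B' D D' : Obj C} (f : Hom A A') (g : Hom B B') (h : Hom D D') :
  assoc A' B' D' ∘ ((f ⊗m g) ⊗m h) = (f ⊗m (g ⊗m h)) ∘ assoc A B D.
Proof. apply assoc_nat. Qed.

Lemma assoc_nat_r {A B D D' : Obj C} (h : Hom D D') :
  assoc A B D' ∘ (idm (A ⊗ B) ⊗m h) = (idm A ⊗m (idm B ⊗m h)) ∘ assoc A B D.
Proof. rewrite <- tensm_idm; apply assoc_nat. Qed.

Lemma assoc_inv_natE {A A' B B' D D' : Obj C} (f : Hom A A') (g : Hom B B') (h : Hom D D') :
  assoc_inv A' B' D' ∘ (f ⊗m (g ⊗m h)) = ((f ⊗m g) ⊗m h) ∘ assoc_inv A B D.
Proof.
  rewrite <- (comp_idm (_ ∘ _)), <- (assoc_assoc_inv A B D), compA.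
  rewrite <- (compA (assoc A B D)), <- assoc_natE, !compA, assoc_inv_assoc, idm_comp.
  reflexivity.
Qed.

Lemma assoc_inv_nat_l {A A' B D : Obj C} (f : Hom A A') :
  assoc_inv A' B D ∘ (f ⊗m idm (B ⊗ D)) = ((f ⊗m idm B) ⊗m idm D) ∘ assoc_inv A B D.
Proof. rewrite <- tensm_idm; apply assoc_inv_natE. Qed.

Lemma pentagonE {A B D E : Obj C} :
  assoc A B (D ⊗ E) ∘ assoc (A ⊗ B) D E
  = (idm A ⊗m assoc B D E) ∘ assoc A (B ⊗ D) E ∘ (assoc A B D ⊗m idm E).
Proof. rewrite pentagon, compA; reflexivity. Qed.

Lemma sym_tens_r {A B D : Obj C} :
  sym A (B ⊗ D) = assoc_inv B D A ∘ (idm B ⊗m sym A D) ∘ assoc B A D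
                  ∘ (sym A B ⊗m idm D) ∘ assoc_inv A B D.
Proof.
  transitivity (assoc_inv B D A ∘ (assoc B D A ∘ (sym A (B ⊗ D) ∘ assoc A B D))
                ∘ assoc_inv A B D).
  { rewrite compA, assoc_inv_assoc, idm_comp, <- compA, assoc_assoc_inv, comp_idm.
    reflexivity. }
  rewrite hexagon, !compA; reflexivity.
Qed.

End Monoidal.

(* [rewrite] matches syntactically, so the abbreviations [par], [dual] (and, for
   lemmas about the double-dual unit, [dcan], [dualm]) of an instantiated lemma must
   be unfolded to agree with an unfolded goal. *)
Ltac rewrite_par H :=
  let h := fresh in pose proof H as h; unfold par, dual in h; rewrite h; clear h.

Ltac rewrite_nf H :=
  let h := fresh in
  pose proof H as h; unfold dcan, dualm, par, dual in h; rewrite h; clear h.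

Section Closed.
Context {C : StarAut}.

Lemma lam_comp {A A' B D : Obj C} (h : Hom (A ⊗ B) D) (f : Hom A' A) :
  lam h ∘ f = lam (h ∘ (f ⊗m idm B)).
Proof.
  rewrite <- (lam_ev _ _ _ _ (lam h ∘ f)), tensm_comp_l, compA, ev_lam; reflexivity.
Qed.

Lemma ev_lam_tensm {A B D B' : Obj C} (h : Hom (A ⊗ B) D) (g : Hom B' B) :
  ev B D ∘ (lam h ⊗m g) = h ∘ (idm A ⊗m g).
Proof.
  assert (Esplit : lam h ⊗m g = (lam h ⊗m idm B) ∘ (idm A ⊗m g)).
  { rewrite tensm_compE, idm_comp, comp_idm; reflexivity. }
  rewrite Esplit, compA, ev_lam; reflexivity.
Qed.

Lemma lam_evE (B D : Obj C) : lam (ev B D) = idm (ihom B D).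
Proof. rewrite <- (lam_ev _ _ _ _ (idm (ihom B D))), tensm_idm, comp_idm; reflexivity. Qed.

Lemma ihom_ext {A B D : Obj C} (f g : Hom A (ihom B D)) :
  ev B D ∘ (f ⊗m idm B) = ev B D ∘ (g ⊗m idm B) -> f = g.
Proof. intros H; rewrite <- (lam_ev _ _ _ _ f), <- (lam_ev _ _ _ _ g), H; reflexivity. Qed.

Lemma dd_dcan (A : Obj C) : dd A ∘ dcan A = idm A.
Proof. apply dd_iso1. Qed.

Lemma dcan_dd (A : Obj C) : dcan A ∘ dd A = idm _.
Proof. apply dd_iso2. Qed.

Lemma ev_sym_dcan (A : Obj C) :
  ev A bot ∘ sym A (A^⊥) = ev (A^⊥) bot ∘ (dcan A ⊗m idm (A^⊥)).
Proof. unfold dcan; rewrite ev_lam; reflexivity. Qed.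

Lemma ev_dd_r {V U W : Obj C} (g : Hom U (V^⊥)) (L : Hom W ((V^⊥)^⊥)) :
  ev V bot ∘ (g ⊗m (dd V ∘ L)) = ev (V^⊥) bot ∘ (L ⊗m g) ∘ sym U W.
Proof.
  unfold dual in *.
  assert (Eev : ev (ihom V bot) bot = ev V bot ∘ sym V (ihom V bot) ∘ (dd V ⊗m idm _)).
  { rewrite_nf (ev_sym_dcan V).
    rewrite <- compA, (tensm_compE (dd V)); rewrite_nf (dcan_dd V).
    rewrite idm_comp, tensm_idm, comp_idm; reflexivity. }
  rewrite Eev, <- (compA (L ⊗m g)), tensm_compE, idm_comp, <- (compA _ (sym V _)), sym_natE.
  rewrite <- !compA, sym_sym, comp_idm; reflexivity.
Qed.

Lemma ev_dd_l {V U W : Obj C} (L : Hom W (((V^⊥)^⊥)^⊥)) (g : Hom U V) :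
  ev V bot ∘ ((dd (V^⊥) ∘ L) ⊗m g) = ev ((V^⊥)^⊥) bot ∘ (L ⊗m (dcan V ∘ g)).
Proof.
  unfold dcan, dual in *.
  assert (Eev : ev V bot = ev (ihom V bot) bot ∘ (lam (ev V bot ∘ sym V _) ⊗m idm _)
                           ∘ sym (ihom V bot) V).
  { rewrite_nf (eq_sym (ev_sym_dcan V)); rewrite <- compA, sym_sym, comp_idm; reflexivity. }
  rewrite Eev at 1; rewrite <- !compA, sym_natE, (compA (sym _ _)), tensm_compE, idm_comp, compA.
  rewrite_nf (ev_dd_r (lam (ev V bot ∘ sym V (ihom V bot)) ∘ g) L).
  rewrite <- compA, sym_sym, comp_idm; reflexivity.
Qed.

Lemma ev_dd_r0 {V U : Obj C} (g : Hom U (V^⊥)) :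
  ev V bot ∘ (g ⊗m dd V) = ev (V^⊥) bot ∘ (idm _ ⊗m g) ∘ sym U _.
Proof. rewrite <- (comp_idm (dd V)), ev_dd_r; reflexivity. Qed.

Lemma ev_dd_l0 {V U : Obj C} (g : Hom U V) :
  ev V bot ∘ (dd (V^⊥) ⊗m g) = ev ((V^⊥)^⊥) bot ∘ (idm _ ⊗m (dcan V ∘ g)).
Proof. rewrite <- (comp_idm (dd (V^⊥))), ev_dd_l; reflexivity. Qed.

Lemma ev_comp_dd_r {V V' U W : Obj C} (g : Hom V V') (φ : Hom U (V'^⊥))
    (L : Hom W ((V^⊥)^⊥)) :
  ev V' bot ∘ (φ ⊗m (g ∘ dd V ∘ L))
  = ev (V^⊥) bot ∘ (L ⊗m (dualm g ∘ φ)) ∘ sym U W.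
Proof.
  unfold dualm, dual in *.
  set (k := lam (ev V' bot ∘ (idm (ihom V' bot) ⊗m g))).
  assert (Eg : ev V' bot ∘ (idm _ ⊗m g) = ev V bot ∘ (k ⊗m idm V)).
  { unfold k; rewrite ev_lam; reflexivity. }
  rewrite <- (idm_comp φ) at 1; rewrite <- compA, <- tensm_compE, compA, Eg, <- compA.
  rewrite tensm_compE, idm_comp; rewrite_nf (ev_dd_r (k ∘ φ) L); reflexivity.
Qed.

Lemma hom_ext_pairing {U A : Obj C} (f g : Hom U A) :
  ev A bot ∘ sym A (A^⊥) ∘ (f ⊗m idm (A^⊥)) = ev A bot ∘ sym A (A^⊥) ∘ (g ⊗m idm (A^⊥)) ->
  f = g.
Proof.
  rewrite ev_sym_dcan; unfold dcan, dual.
  rewrite <- !compA, !tensm_compE, idm_comp.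
  intros H; apply ihom_ext in H.
  rewrite <- (idm_comp f), <- (idm_comp g); rewrite_nf (eq_sym (dd_dcan A)).
  rewrite <- !compA, H; reflexivity.
Qed.

End Closed.

Ltac is_structural t :=
  lazymatch t with
  | assoc _ _ _ => idtac
  | assoc_inv _ _ _ => idtac
  | sym _ _ => idtac
  | idm _ => idtac
  | ?a ⊗m ?b => is_structural a; is_structural b
  | ?a ∘ ?b => is_structural a; is_structural b
  end.
Ltac not_structural t := tryif is_structural t then fail else idtac.

(* Normal form: composites left-nested, inverse pairs cancelled, [lam] absorbing
   precomposition, evaluations of [lam] and of [dd] reduced, and associators and
   symmetries moved to the right by naturality. *)
Ltac cat_step :=
  match goal with
  | |- context [ ?h ∘ (?g ∘ ?f) ] => rewrite_par (compA f g h)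
  | |- context [ idm _ ∘ ?f ] => rewrite_par (idm_comp f)
  | |- context [ ?f ∘ idm _ ] => rewrite_par (comp_idm f)
  | |- context [ idm ?A ⊗m idm ?B ] => rewrite_par (@tensm_idm _ A B)
  | |- context [ ?z ∘ dd ?A ∘ lam (ev ?A bot ∘ sym ?A _) ] =>
      rewrite_nf (comp_ctx _ _ _ z (dd_dcan A))
  | |- context [ dd ?A ∘ lam (ev ?A bot ∘ sym ?A _) ] => rewrite_nf (dd_dcan A)
  | |- context [ ?z ∘ lam (ev ?A bot ∘ sym ?A _) ∘ dd ?A ] =>
      rewrite_nf (comp_ctx _ _ _ z (dcan_dd A))
  | |- context [ lam (ev ?A bot ∘ sym ?A _) ∘ dd ?A ] => rewrite_nf (dcan_dd A)
  | |- context [ ?z ∘ sym ?B ?A ∘ sym ?A ?B ] => rewrite_par (comp_ctx _ _ _ z (sym_sym A B))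
  | |- context [ sym ?B ?A ∘ sym ?A ?B ] => rewrite_par (sym_sym A B)
  | |- context [ ?z ∘ assoc ?A ?B ?D ∘ assoc_inv ?A ?B ?D ] =>
      rewrite_par (comp_ctx _ _ _ z (assoc_assoc_inv A B D))
  | |- context [ assoc ?A ?B ?D ∘ assoc_inv ?A ?B ?D ] => rewrite_par (assoc_assoc_inv A B D)
  | |- context [ ?z ∘ assoc_inv ?A ?B ?D ∘ assoc ?A ?B ?D ] =>
      rewrite_par (comp_ctx _ _ _ z (assoc_inv_assoc A B D))
  | |- context [ assoc_inv ?A ?B ?D ∘ assoc ?A ?B ?D ] => rewrite_par (assoc_inv_assoc A B D)
  | |- context [ lam (ev ?B ?D) ] => rewrite_par (lam_evE B D)
  | |- context [ ev ?B ?D ∘ (lam ?h ⊗m ?g) ] => rewrite_par (ev_lam_tensm h g)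
  | |- context [ lam (?h ∘ (?s ⊗m idm _)) ] => is_structural s; rewrite_par (eq_sym (lam_comp h s))
  | |- context [ ?z ∘ lam ?h ∘ ?f ] => not_structural f; rewrite_par (comp_ctx _ _ _ z (lam_comp h f))
  | |- context [ lam ?h ∘ ?f ] => not_structural f; rewrite_par (lam_comp h f)
  | |- context [ ev ?V bot ∘ (?g ⊗m (dd ?V ∘ ?L)) ] => rewrite_par (ev_dd_r g L)
  | |- context [ ev ?V' bot ∘ (?φ ⊗m (?g ∘ dd ?V ∘ ?L)) ] => rewrite_nf (ev_comp_dd_r g φ L)
  | |- context [ ev ?V bot ∘ (?g ⊗m dd ?V) ] => rewrite_par (ev_dd_r0 g)
  | |- context [ ev ?V bot ∘ ((dd _ ∘ ?L) ⊗m ?g) ] => rewrite_nf (@ev_dd_l _ V _ _ L g)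
  | |- context [ ev ?V bot ∘ (dd _ ⊗m ?g) ] => rewrite_nf (@ev_dd_l0 _ V _ g)
  | |- context [ (?f ∘ ?s) ⊗m ?h ] => is_structural s; not_structural f; rewrite_par (tensm_comp_l f s h)
  | |- context [ ?h ⊗m (?f ∘ ?s) ] => is_structural s; not_structural f; rewrite_par (tensm_comp_r f s h)
  | |- context [ ?z ∘ (?f' ⊗m ?g') ∘ (?f ⊗m ?g) ] =>
      tryif is_structural (f ⊗m g) then is_structural (f' ⊗m g') else idtac;
      rewrite_par (comp_ctx _ _ _ z (tensm_compE f f' g g'))
  | |- context [ (?f' ⊗m ?g') ∘ (?f ⊗m ?g) ] =>
      tryif is_structural (f ⊗m g) then is_structural (f' ⊗m g') else idtac;
      rewrite_par (tensm_compE f f' g g')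
  | |- context [ ?z ∘ sym _ _ ∘ (?f ⊗m ?g) ] => rewrite_par (comp_ctx _ _ _ z (sym_natE f g))
  | |- context [ sym _ _ ∘ (?f ⊗m ?g) ] => rewrite_par (sym_natE f g)
  | |- context [ ?z ∘ assoc _ _ _ ∘ ((?f ⊗m ?g) ⊗m ?h) ] =>
      rewrite_par (comp_ctx _ _ _ z (assoc_natE f g h))
  | |- context [ assoc _ _ _ ∘ ((?f ⊗m ?g) ⊗m ?h) ] => rewrite_par (assoc_natE f g h)
  | |- context [ ?z ∘ assoc ?A ?B _ ∘ (idm _ ⊗m ?h) ] =>
      rewrite_par (comp_ctx _ _ _ z (@assoc_nat_r _ A B _ _ h))
  | |- context [ assoc ?A ?B _ ∘ (idm _ ⊗m ?h) ] => rewrite_par (@assoc_nat_r _ A B _ _ h)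
  | |- context [ ?z ∘ assoc_inv _ _ _ ∘ (?f ⊗m (?g ⊗m ?h)) ] =>
      rewrite_par (comp_ctx _ _ _ z (assoc_inv_natE f g h))
  | |- context [ assoc_inv _ _ _ ∘ (?f ⊗m (?g ⊗m ?h)) ] => rewrite_par (assoc_inv_natE f g h)
  | |- context [ ?z ∘ assoc_inv _ ?B ?D ∘ (?f ⊗m idm _) ] =>
      rewrite_par (comp_ctx _ _ _ z (@assoc_inv_nat_l _ _ _ B D f))
  | |- context [ assoc_inv _ ?B ?D ∘ (?f ⊗m idm _) ] => rewrite_par (@assoc_inv_nat_l _ _ _ B D f)
  end.
Ltac cat_simpl := repeat cat_step.

Ltac unfold_star := unfold tau, curryL, curry, evL, evR, uncurry, parsym, parm, parassoc,
  parassoc_inv, dualm, dcan, par, dual in *.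

Ltac cancel_common_prefix := repeat rewrite <- compA;
  repeat match goal with |- ?a ∘ ?b = ?a ∘ ?c => apply (f_equal (fun x => a ∘ x)) end.

Lemma sym_tens_l {C : StarAut} {A B D : Obj C} :
  sym (A ⊗ B) D = assoc D A B ∘ (sym A D ⊗m idm B) ∘ assoc_inv A D B
                  ∘ (idm A ⊗m sym B D) ∘ assoc A B D.
Proof.
  assert (Hinv : sym D (A ⊗ B) ∘ (assoc D A B ∘ (sym A D ⊗m idm B) ∘ assoc_inv A D B
                                  ∘ (idm A ⊗m sym B D) ∘ assoc A B D) = idm _).
  { rewrite sym_tens_r; cat_simpl; reflexivity. }
  rewrite <- (comp_idm (sym (A ⊗ B) D)), <- Hinv, compA, sym_sym, idm_comp; reflexivity.
Qed.

Ltac expand_sym := repeat match goal with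
  | |- context [ sym ?A (?B ⊗ ?D) ] => rewrite (@sym_tens_r _ A B D)
  | |- context [ sym (?A ⊗ ?B) ?D ] => rewrite (@sym_tens_l _ A B D)
  end.

Section AssocCoherence.
Context {C : StarAut}.

Inductive texpr : Type := TAtom (x : Obj C) | TTens (a b : texpr).

Fixpoint tinterp (a : texpr) : Obj C :=
  match a with TAtom x => x | TTens a b => tinterp a ⊗ tinterp b end.

Fixpoint rnf (a : texpr) (t : Obj C) : Obj C :=
  match a with TAtom x => x ⊗ t | TTens a b => rnf a (rnf b t) end.

Fixpoint to_rnf (a : texpr) (t : Obj C) : Hom (tinterp a ⊗ t) (rnf a t) :=
  match a with
  | TAtom _ => idm _
  | TTens a b => to_rnf a (rnf b t) ∘ (idm _ ⊗m to_rnf b t) ∘ assoc _ _ _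
  end.

Fixpoint of_rnf (a : texpr) (t : Obj C) : Hom (rnf a t) (tinterp a ⊗ t) :=
  match a with
  | TAtom _ => idm _
  | TTens a b => assoc_inv _ _ _ ∘ (idm _ ⊗m of_rnf b t) ∘ of_rnf a (rnf b t)
  end.

Lemma of_to_rnf (a : texpr) (t : Obj C) : of_rnf a t ∘ to_rnf a t = idm _.
Proof.
  revert t; induction a as [x|a IHa b IHb]; intros t; simpl.
  - apply idm_comp.
  - rewrite <- !compA, (compA _ (to_rnf a _)), IHa, idm_comp.
    rewrite (compA (assoc _ _ _)), tensm_compE, IHb, idm_comp, tensm_idm, idm_comp.
    apply assoc_inv_assoc.
Qed.

Lemma to_of_rnf (a : texpr) (t : Obj C) : to_rnf a t ∘ of_rnf a t = idm _.
Proof.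
  revert t; induction a as [x|a IHa b IHb]; intros t; simpl.
  - apply idm_comp.
  - rewrite <- !compA, (compA _ (assoc_inv _ _ _)), assoc_assoc_inv, idm_comp.
    rewrite (compA (of_rnf a _)), tensm_compE, IHb, idm_comp, tensm_idm, idm_comp.
    apply IHa.
Qed.

Inductive tmor : texpr -> texpr -> Type :=
| TId a : tmor a a
| TComp a b d : tmor b d -> tmor a b -> tmor a d
| TTensm a a' b b' : tmor a a' -> tmor b b' -> tmor (TTens a b) (TTens a' b')
| TAssoc a b d : tmor (TTens (TTens a b) d) (TTens a (TTens b d))
| TAssocInv a b d : tmor (TTens a (TTens b d)) (TTens (TTens a b) d)
| TBox x y : Hom (tinterp x) (tinterp y) -> tmor x y.

Fixpoint tmor_interp {a b} (s : tmor a b) : Hom (tinterp a) (tinterp b) :=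
  match s with
  | TId a => idm (tinterp a)
  | TComp _ _ _ s2 s1 => tmor_interp s2 ∘ tmor_interp s1
  | TTensm _ _ _ _ s1 s2 => tmor_interp s1 ⊗m tmor_interp s2
  | TAssoc a b d => assoc (tinterp a) (tinterp b) (tinterp d)
  | TAssocInv a b d => assoc_inv (tinterp a) (tinterp b) (tinterp d)
  | TBox _ _ f => f
  end.

Fixpoint rnf_map (a : texpr) {T1 T2 : Obj C} (g : Hom T1 T2) : Hom (rnf a T1) (rnf a T2) :=
  match a with
  | TAtom x => idm x ⊗m g
  | TTens a b => rnf_map a (rnf_map b g)
  end.

(* Associators act as identities on right normal forms. *)
Fixpoint tmor_rnf {a b} (s : tmor a b) (t : Obj C) : Hom (rnf a t) (rnf b t) :=
  match s with
  | TId a => idm _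
  | TComp _ _ _ s2 s1 => tmor_rnf s2 t ∘ tmor_rnf s1 t
  | TTensm a a' b b' s1 s2 => tmor_rnf s1 (rnf b' t) ∘ rnf_map a (tmor_rnf s2 t)
  | TAssoc a b d => idm _
  | TAssocInv a b d => idm _
  | TBox x y f => to_rnf y t ∘ (f ⊗m idm t) ∘ of_rnf x t
  end.

Lemma to_rnf_nat (a : texpr) (T1 T2 : Obj C) (g : Hom T1 T2) :
  to_rnf a T2 ∘ (idm (tinterp a) ⊗m g) = rnf_map a g ∘ to_rnf a T1.
Proof.
  revert T1 T2 g; induction a as [x|a IHa b IHb]; intros T1 T2 g; simpl.
  - rewrite idm_comp, comp_idm; reflexivity.
  - rewrite <- !compA, assoc_nat_r, (compA (assoc _ _ _)), tensm_compE, idm_comp, IHb.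
    rewrite tensm_comp_r, !compA, IHa; reflexivity.
Qed.

Lemma to_rnf_assoc (a b d : texpr) (t : Obj C) :
  to_rnf (TTens a (TTens b d)) t ∘ (assoc (tinterp a) (tinterp b) (tinterp d) ⊗m idm t)
  = to_rnf (TTens (TTens a b) d) t.
Proof.
  simpl.
  rewrite (tensm_comp_r _ (assoc _ _ _)), (tensm_comp_r (to_rnf b _)), <- !compA.
  rewrite (compA (assoc _ _ _ ⊗m idm t)), <- pentagonE.
  rewrite (compA (assoc (_ ⊗ _) _ _)), <- assoc_nat_r, !compA; reflexivity.
Qed.

Lemma to_rnf_tmor {a b : texpr} (s : tmor a b) (t : Obj C) :
  to_rnf b t ∘ (tmor_interp s ⊗m idm t) = tmor_rnf s t ∘ to_rnf a t.
Proof.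
  revert t; induction s as [a|a b d s2 IH2 s1 IH1|a a' b b' s1 IH1 s2 IH2|a b d|a b d|x y f];
    intros t; simpl tmor_interp; simpl tmor_rnf.
  - rewrite tensm_idm, idm_comp, comp_idm; reflexivity.
  - rewrite <- (idm_comp (idm t)), tensm_comp, compA, IH2, <- compA, IH1, compA; reflexivity.
  - transitivity (to_rnf a' (rnf b' t) ∘ (tmor_interp s1 ⊗m idm _)
                  ∘ (idm _ ⊗m (to_rnf b' t ∘ (tmor_interp s2 ⊗m idm t))) ∘ assoc _ _ _).
    { simpl; cat_simpl; reflexivity. }
    rewrite IH1, IH2, (tensm_comp_r (tmor_rnf s2 t) (to_rnf b t) (idm (tinterp a))).
    rewrite !compA, (comp_ctx _ _ _ _ (to_rnf_nat a _ _ (tmor_rnf s2 t))).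
    cbn [to_rnf]; rewrite !compA; reflexivity.
  - rewrite idm_comp; apply to_rnf_assoc.
  - pose proof (to_rnf_assoc a b d t) as Hassoc; cbn [tinterp] in *.
    rewrite idm_comp, <- Hassoc, <- compA, tensm_compE, assoc_assoc_inv, idm_comp.
    rewrite tensm_idm, comp_idm; reflexivity.
  - rewrite <- !compA, of_to_rnf, comp_idm; reflexivity.
Qed.

(* Mac Lane coherence for associativity, with non-structural maps as opaque boxes. *)
Theorem tmor_interp_eq {a b : texpr} (s1 s2 : tmor a b) :
  tmor_rnf s1 (unit C) = tmor_rnf s2 (unit C) -> tmor_interp s1 = tmor_interp s2.
Proof.
  intros Hrnf.
  assert (Htens : tmor_interp s1 ⊗m idm (unit C) = tmor_interp s2 ⊗m idm (unit C)).
  { rewrite <- (idm_comp (tmor_interp s1 ⊗m _)), <- (idm_comp (tmor_interp s2 ⊗m _)).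
    rewrite <- (of_to_rnf b (unit C)), <- !compA, !to_rnf_tmor, Hrnf; reflexivity. }
  assert (Hrunit : tmor_interp s1 ∘ runit C _ = tmor_interp s2 ∘ runit C _).
  { rewrite <- !runit_nat, Htens; reflexivity. }
  rewrite <- (comp_idm (tmor_interp s1)), <- (comp_idm (tmor_interp s2)).
  rewrite <- (runit_iso2 C (tinterp a)), !compA, Hrunit; reflexivity.
Qed.

End AssocCoherence.

Ltac reify_obj X :=
  lazymatch X with
  | tens ?A ?B => let a := reify_obj A in let b := reify_obj B in constr:(TTens a b)
  | _ => constr:(TAtom X)
  end.

Ltac reify_mor f :=
  lazymatch f with
  | idm ?X => let a := reify_obj X in constr:(TId a)
  | ?g ∘ ?h => let sg := reify_mor g in let sh := reify_mor h in constr:(TComp _ _ _ sg sh)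
  | ?g ⊗m ?h => let sg := reify_mor g in let sh := reify_mor h in constr:(TTensm _ _ _ _ sg sh)
  | assoc ?A ?B ?D =>
      let a := reify_obj A in let b := reify_obj B in let d := reify_obj D in
      constr:(TAssoc a b d)
  | assoc_inv ?A ?B ?D =>
      let a := reify_obj A in let b := reify_obj B in let d := reify_obj D in
      constr:(TAssocInv a b d)
  | _ =>
      lazymatch type of f with
      | Hom ?A ?B => let a := reify_obj A in let b := reify_obj B in constr:(TBox a b f)
      end
  end.

Ltac assoc_normalize :=
  match goal with
  | |- ?f = ?g =>
      let s1 := reify_mor f in let s2 := reify_mor g in
      change (tmor_interp s1 = tmor_interp s2); apply tmor_interp_eq;
      cbn [tmor_rnf rnf_map rnf to_rnf of_rnf tinterp]
  end.

Section Evaluations.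
Context {C : StarAut}.

Lemma evL_parm (X Q Q' : Obj C) (g : Hom Q Q') :
  evL X Q' ∘ (idm _ ⊗m parm (idm X) g) = g ∘ evL X Q.
Proof. apply hom_ext_pairing; unfold_star; cat_simpl; reflexivity. Qed.

Lemma evLR_tau (A B D E : Obj C) :
  evR E (B ⊗ D) ∘ ((evL A ((B ⊗ D) ⅋ E) ∘ (idm _ ⊗m tau A B D E)) ⊗m idm _)
  = (evL A B ⊗m evR E D) ∘ assoc_inv _ _ _ ∘ (idm _ ⊗m assoc _ _ _) ∘ assoc _ _ _.
Proof. apply hom_ext_pairing; unfold_star; cat_simpl; reflexivity. Qed.

Lemma evR_evL_parassoc (X Q N : Obj C) :
  evR N Q ∘ ((evL X (Q ⅋ N) ∘ (idm _ ⊗m parassoc X Q N)) ⊗m idm _)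
  = evL X Q ∘ (idm _ ⊗m evR N (X ⅋ Q)) ∘ assoc _ _ _.
Proof.
  apply hom_ext_pairing; unfold_star; cat_simpl; cancel_common_prefix.
  expand_sym; assoc_normalize; cat_simpl; reflexivity.
Qed.

Lemma evR_parassoc (A B D : Obj C) :
  evR (B ⅋ D) A ∘ (parassoc A B D ⊗m dcan (D^⊥ ⊗ B^⊥))
  = evR B A ∘ (evR D (A ⅋ B) ⊗m idm _) ∘ assoc_inv _ _ _.
Proof. apply hom_ext_pairing; unfold_star; cat_simpl; assoc_normalize; cat_simpl; reflexivity. Qed.

Lemma parassoc_parassoc_inv (A B D : Obj C) : parassoc A B D ∘ parassoc_inv A B D = idm _.
Proof. apply ihom_ext; unfold_star; cat_simpl; reflexivity. Qed.

Lemma curry_evR {U B D : Obj C} (h : Hom U (D ⅋ B)) : curry (evR B D ∘ (h ⊗m idm _)) = h.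
Proof. apply ihom_ext; unfold_star; cat_simpl; reflexivity. Qed.

Lemma curryL_evL {U B D : Obj C} (f : Hom U (B ⅋ D)) : curryL (evL B D ∘ (idm _ ⊗m f)) = f.
Proof.
  apply ihom_ext; unfold_star; cat_simpl.
  rewrite <- compA, tensm_compE, sym_sym, comp_idm; reflexivity.
Qed.

Definition ev_partial (A B : Obj C) : Hom (B ⊗ (A ⊗ B)^⊥) (A^⊥) :=
  lam (ev (A ⊗ B) bot ∘ (idm _ ⊗m sym B A) ∘ assoc _ _ _ ∘ (sym B ((A ⊗ B)^⊥) ⊗m idm A)).

Lemma ev_tens_partial (A B : Obj C) :
  ev (A ⊗ B) bot = ev A bot ∘ (ev_partial A B ⊗m idm A) ∘ (sym _ B ⊗m idm A)
                   ∘ assoc_inv _ _ _ ∘ (idm _ ⊗m sym A B).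
Proof. unfold ev_partial, dual; rewrite ev_lam; cat_simpl; reflexivity. Qed.

(* The permutation left over in [evR_tau].  Moving the symmetry past the block [I]
   first is what makes hexagon expansion reduce it to associativity coherence. *)
Lemma evR_tau_shuffle (u q z ψ p : Obj C) :
  (idm u ⊗m ((sym ψ (q ⊗ z) ⊗m idm p) ∘ sym p (ψ ⊗ (q ⊗ z))))
  ∘ assoc u p (ψ ⊗ (q ⊗ z))
  ∘ sym (ψ ⊗ (q ⊗ z)) (u ⊗ p)
  ∘ assoc_inv ψ (q ⊗ z) (u ⊗ p)
  ∘ (idm ψ ⊗m ((idm (q ⊗ z) ⊗m sym p u) ∘ sym (p ⊗ u) (q ⊗ z) ∘ assoc_inv p u (q ⊗ z)
        ∘ (idm p ⊗m assoc u q z) ∘ assoc p (u ⊗ q) z ∘ (sym (u ⊗ q) p ⊗m idm z)))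
  ∘ sym (((u ⊗ q) ⊗ p) ⊗ z) ψ
  ∘ assoc_inv ((u ⊗ q) ⊗ p) z ψ
  ∘ assoc_inv (u ⊗ q) p (z ⊗ ψ)
  ∘ (idm (u ⊗ q) ⊗m sym (z ⊗ ψ) p)
  ∘ assoc (u ⊗ q) (z ⊗ ψ) p
  = assoc u ((q ⊗ z) ⊗ ψ) p ∘ (((idm u ⊗m assoc_inv q z ψ) ∘ assoc u q (z ⊗ ψ)) ⊗m idm p).
Proof.
  set (I := (idm (q ⊗ z) ⊗m sym p u) ∘ sym (p ⊗ u) (q ⊗ z) ∘ assoc_inv p u (q ⊗ z)
        ∘ (idm p ⊗m assoc u q z) ∘ assoc p (u ⊗ q) z ∘ (sym (u ⊗ q) p ⊗m idm z)).
  rewrite (comp_ctx _ _ _ _ (eq_sym (sym_natE I (idm ψ)))).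
  rewrite (@sym_tens_l _ (q ⊗ z) (u ⊗ p) ψ); cat_simpl.
  rewrite (@sym_tens_l _ (q ⊗ z) ψ (u ⊗ p)); cat_simpl; unfold I; cat_simpl.
  expand_sym; assoc_normalize; cat_simpl; reflexivity.
Qed.

Lemma evR_tau (P A B Z : Obj C) :
  evR ((A ⊗ B) ⅋ Z) P ∘ (tau P A B Z ⊗m dcan (Z^⊥ ⊗ (A ⊗ B)^⊥))
  = evR A P ∘ (idm _ ⊗m (ev_partial A B ∘ (evR Z B ⊗m idm _)))
    ∘ (idm _ ⊗m assoc_inv _ _ _) ∘ assoc _ _ _.
Proof.
  apply hom_ext_pairing; unfold_star; cat_simpl.
  rewrite_nf (ev_tens_partial A B); cat_simpl; cancel_common_prefix.
  rewrite ?compA; apply evR_tau_shuffle.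
Qed.

End Evaluations.

Ltac head_of t := lazymatch t with ?f _ => head_of f | _ => t end.

Ltac regroup_after c :=
  repeat match goal with
  | |- context [ (?h ∘ ?g) ∘ ?f ] =>
      let hd := head_of h in constr_eq hd c; rewrite_par (eq_sym (compA f g h))
  end.

Section TwoTensor.
Context {C : StarAut}.

Lemma par_hom_ext {U X M V W : Obj C} (f g : Hom U (X ⅋ (M ⅋ V)))
    (T : Hom W (V^⊥)) (T' : Hom (V^⊥) W) (HT : T ∘ T' = idm _) :
  evR V M ∘ ((evL X (M ⅋ V) ∘ (idm _ ⊗m f)) ⊗m T)
  = evR V M ∘ ((evL X (M ⅋ V) ∘ (idm _ ⊗m g)) ⊗m T) -> f = g.
Proof.
  intros H.
  assert (Hid : evR V M ∘ ((evL X (M ⅋ V) ∘ (idm _ ⊗m f)) ⊗m idm _)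
              = evR V M ∘ ((evL X (M ⅋ V) ∘ (idm _ ⊗m g)) ⊗m idm _)).
  { rewrite <- HT, <- (comp_idm (evL X (M ⅋ V) ∘ (idm _ ⊗m f))),
      <- (comp_idm (evL X (M ⅋ V) ∘ (idm _ ⊗m g))), !tensm_comp, !compA, H.
    reflexivity. }
  apply (f_equal curry) in Hid; rewrite !curry_evR in Hid.
  apply (f_equal curryL) in Hid; rewrite !curryL_evL in Hid.
  exact Hid.
Qed.

Lemma evLR_tau_comp {A B D E G1 G2 G3 G4 : Obj C} (a : Hom G1 (A^⊥)) (p : Hom G2 (A ⅋ B))
    (q : Hom G3 (D ⅋ E)) (e : Hom G4 (E^⊥)) :
  evR E (B ⊗ D) ∘ ((evL A ((B ⊗ D) ⅋ E) ∘ (a ⊗m (tau A B D E ∘ (p ⊗m q)))) ⊗m e)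
  = ((evL A B ∘ (a ⊗m p)) ⊗m (evR E D ∘ (q ⊗m e)))
    ∘ assoc_inv _ _ _ ∘ (idm _ ⊗m assoc _ _ _) ∘ assoc _ _ _.
Proof.
  transitivity (evR E (B ⊗ D) ∘ ((evL A ((B ⊗ D) ⅋ E) ∘ (idm _ ⊗m tau A B D E)) ⊗m idm _)
                ∘ ((a ⊗m (p ⊗m q)) ⊗m e)).
  { unfold par, dual in *; cat_simpl; reflexivity. }
  unfold par, dual in *; rewrite_par (evLR_tau A B D E); cat_simpl; reflexivity.
Qed.

Lemma evR_parassoc_comp {A B D G1 G2 G3 : Obj C} (w : Hom G1 ((A ⅋ B) ⅋ D))
    (t1 : Hom G2 (D^⊥)) (t2 : Hom G3 (B^⊥)) :
  evR ((D^⊥ ⊗ B^⊥)^⊥) A ∘ ((parassoc A B D ∘ w) ⊗m (dcan (D^⊥ ⊗ B^⊥) ∘ (t1 ⊗m t2)))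
  = evR B A ∘ ((evR D (A ⅋ B) ∘ (w ⊗m t1)) ⊗m t2) ∘ assoc_inv _ _ _.
Proof.
  transitivity (evR (B ⅋ D) A ∘ (parassoc A B D ⊗m dcan (D^⊥ ⊗ B^⊥)) ∘ (w ⊗m (t1 ⊗m t2))).
  { unfold par, dual in *; cat_simpl; reflexivity. }
  unfold par, dual in *; rewrite_par (evR_parassoc A B D); cat_simpl; reflexivity.
Qed.

Lemma evR_parassoc_comp_l {A B D G2 G3 : Obj C} (t1 : Hom G2 (D^⊥)) (t2 : Hom G3 (B^⊥)) :
  evR ((D^⊥ ⊗ B^⊥)^⊥) A ∘ (parassoc A B D ⊗m (dcan (D^⊥ ⊗ B^⊥) ∘ (t1 ⊗m t2)))
  = evR B A ∘ ((evR D (A ⅋ B) ∘ (idm _ ⊗m t1)) ⊗m t2) ∘ assoc_inv _ _ _.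
Proof. rewrite <- (comp_idm (parassoc A B D)); apply evR_parassoc_comp. Qed.

Lemma evL_parm_comp {X Q Q' G1 G2 : Obj C} (g : Hom Q Q') (a : Hom G1 (X^⊥))
    (w : Hom G2 (X ⅋ Q)) :
  evL X Q' ∘ (a ⊗m (parm (idm X) g ∘ w)) = g ∘ (evL X Q ∘ (a ⊗m w)).
Proof.
  transitivity (evL X Q' ∘ (idm _ ⊗m parm (idm X) g) ∘ (a ⊗m w)).
  { unfold par, dual in *; cat_simpl; reflexivity. }
  unfold par, dual in *; rewrite_par (evL_parm X Q Q' g); cat_simpl; reflexivity.
Qed.

Lemma evR_evL_parassoc_comp {X Q N G1 G2 G3 : Obj C} (a : Hom G1 (X^⊥))
    (w : Hom G2 ((X ⅋ Q) ⅋ N)) (t : Hom G3 (N^⊥)) :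
  evR N Q ∘ ((evL X (Q ⅋ N) ∘ (a ⊗m (parassoc X Q N ∘ w))) ⊗m t)
  = evL X Q ∘ (a ⊗m (evR N (X ⅋ Q) ∘ (w ⊗m t))) ∘ assoc _ _ _.
Proof.
  transitivity (evR N Q ∘ ((evL X (Q ⅋ N) ∘ (idm _ ⊗m parassoc X Q N)) ⊗m idm _)
                ∘ ((a ⊗m w) ⊗m t)).
  { unfold par, dual in *; cat_simpl; reflexivity. }
  unfold par, dual in *; rewrite_par (evR_evL_parassoc X Q N); cat_simpl; reflexivity.
Qed.

Lemma evL_evR_parassoc_inv_comp {X Q N G1 G2 G3 : Obj C} (a : Hom G1 (X^⊥))
    (m : Hom G2 (X ⅋ (Q ⅋ N))) (t : Hom G3 (N^⊥)) :
  evL X Q ∘ (a ⊗m (evR N (X ⅋ Q) ∘ ((parassoc_inv X Q N ∘ m) ⊗m t)))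
  = evR N Q ∘ ((evL X (Q ⅋ N) ∘ (a ⊗m m)) ⊗m t) ∘ assoc_inv _ _ _.
Proof.
  transitivity (evR N Q ∘ ((evL X (Q ⅋ N) ∘ (a ⊗m (parassoc X Q N ∘ (parassoc_inv X Q N ∘ m))))
                           ⊗m t) ∘ assoc_inv _ _ _).
  - rewrite evR_evL_parassoc_comp, <- !compA, assoc_assoc_inv, comp_idm; reflexivity.
  - rewrite compA, parassoc_parassoc_inv, idm_comp; reflexivity.
Qed.

Lemma evR_evR_parassoc_inv_comp {A B D G1 G2 G3 : Obj C} (h : Hom G1 (A ⅋ (B ⅋ D)))
    (t1 : Hom G2 (D^⊥)) (t2 : Hom G3 (B^⊥)) :
  evR B A ∘ ((evR D (A ⅋ B) ∘ ((parassoc_inv A B D ∘ h) ⊗m t1)) ⊗m t2)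
  = evR ((D^⊥ ⊗ B^⊥)^⊥) A ∘ (h ⊗m (dcan (D^⊥ ⊗ B^⊥) ∘ (t1 ⊗m t2))) ∘ assoc _ _ _.
Proof.
  transitivity (evR ((D^⊥ ⊗ B^⊥)^⊥) A ∘ ((parassoc A B D ∘ (parassoc_inv A B D ∘ h))
                 ⊗m (dcan (D^⊥ ⊗ B^⊥) ∘ (t1 ⊗m t2))) ∘ assoc _ _ _).
  - rewrite evR_parassoc_comp, <- !compA, assoc_inv_assoc, comp_idm; reflexivity.
  - rewrite compA, parassoc_parassoc_inv, idm_comp; reflexivity.
Qed.

Lemma evR_tau_comp {P A B Z G1 G2 : Obj C} (p : Hom G1 (P ⅋ A)) (q : Hom G2 (B ⅋ Z)) :
  evR ((A ⊗ B) ⅋ Z) P ∘ ((tau P A B Z ∘ (p ⊗m q)) ⊗m dcan (Z^⊥ ⊗ (A ⊗ B)^⊥))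
  = evR A P ∘ (idm _ ⊗m (ev_partial A B ∘ (evR Z B ⊗m idm _)))
    ∘ (idm _ ⊗m assoc_inv _ _ _) ∘ assoc _ _ _ ∘ ((p ⊗m q) ⊗m idm _).
Proof.
  transitivity (evR ((A ⊗ B) ⅋ Z) P ∘ (tau P A B Z ⊗m dcan (Z^⊥ ⊗ (A ⊗ B)^⊥))
                ∘ ((p ⊗m q) ⊗m idm _)).
  { unfold par, dual in *; cat_simpl; reflexivity. }
  rewrite evR_tau; reflexivity.
Qed.

End TwoTensor.

Theorem proposition2p14 (C : StarAut) (X A B Y Cc D Z : Obj C) :
  tau X A B (Y ⅋ ((Cc ⊗ D) ⅋ Z))
    ∘ (idm (X ⅋ A) ⊗m (parassoc B Y ((Cc ⊗ D) ⅋ Z) ∘ tau (B ⅋ Y) Cc D Z))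
  =
  parm (idm X) (parassoc (A ⊗ B) Y ((Cc ⊗ D) ⅋ Z))
    ∘ parassoc X ((A ⊗ B) ⅋ Y) ((Cc ⊗ D) ⅋ Z)
    ∘ tau (X ⅋ ((A ⊗ B) ⅋ Y)) Cc D Z
    ∘ ((parassoc_inv X ((A ⊗ B) ⅋ Y) Cc
          ∘ parm (idm X) (parassoc_inv (A ⊗ B) Y Cc)
          ∘ tau X A B (Y ⅋ Cc)
          ∘ (idm (X ⅋ A) ⊗m parassoc B Y Cc))
        ⊗m idm (D ⅋ Z))
    ∘ assoc_inv (X ⅋ A) ((B ⅋ Y) ⅋ Cc) (D ⅋ Z).
Proof.
  (* The double-dual units below have the section [(dd _ ⊗m idm _) ∘ dd _], so it
     suffices to compare both sides after evaluating on [X^⊥] and on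
     [(Z^⊥ ⊗ (Cc ⊗ D)^⊥) ⊗ Y^⊥]. *)
  apply (par_hom_ext _ _ (dcan (((Cc ⊗ D) ⅋ Z)^⊥ ⊗ Y^⊥) ∘ (dcan (Z^⊥ ⊗ (Cc ⊗ D)^⊥) ⊗m idm (Y^⊥)))
                         ((dd _ ⊗m idm _) ∘ dd _)).
  { unfold dcan, par, dual; cat_simpl; reflexivity. }
  unfold par, dual.
  rewrite_par (@evLR_tau_comp C); cat_simpl.
  rewrite_par (@evR_parassoc_comp C); cat_simpl.
  rewrite_par (@evR_tau C); cat_simpl.
  regroup_after @parm; rewrite_par (@evL_parm_comp C); cat_simpl.
  regroup_after @parassoc; rewrite_par (@evR_parassoc_comp C); cat_simpl.
  regroup_after @parassoc; rewrite_par (@evR_evL_parassoc_comp C); cat_simpl.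
  regroup_after @tau; rewrite_par (@evR_tau_comp C); cat_simpl.
  regroup_after @parassoc_inv; rewrite_par (@evL_evR_parassoc_inv_comp C); cat_simpl.
  regroup_after @parm; rewrite_par (@evL_parm_comp C); cat_simpl.
  regroup_after @parassoc_inv; rewrite_par (@evR_evR_parassoc_inv_comp C); cat_simpl.
  regroup_after @tau; rewrite_par (@evLR_tau_comp C); cat_simpl.
  rewrite_par (@evR_parassoc_comp_l C); cat_simpl.
  cancel_common_prefix; assoc_normalize; cat_simpl; reflexivity.
Qed.
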